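(* Let $(h,n)=(3,3)$ and $p\in\mathcal P$. Then: (i) the following are equivalent: (a) the three alternatives ranked first by the three individuals are pairwise distinct and the three alternatives ranked third are pairwise distinct; (b) $\Gamma_2(p)$ is a $3$-cycle. Moreover, if one of these conditions holds, the arc set of $\Gamma_3(p)$ is empty. (ii) $\mu(p)=\mu(p^r)$.
   Context: Here $N=\{1,2,3\}$, $H=\{1,2,3\}$, $\mathcal P$ the set of triples of linear orders on $N$, $p^r$ the profile obtained by reversing each order; $x>_{p_i}y$ means $x\neq y$ and $p_i$ ranks $x$ above $y$; for $\mu\in\{2,3\}$, $x>^p_\mu y$ means $|\{i: x>_{p_i}y\}|\ge\mu$, $\Gamma_\mu(p)$ is the directed graph $(N,\{(x,y): x>^p_\mu y\})$, $D_\mu(p)=\{x\in N: \forall y,\ |\{i: y>_{p_i}x\}|<\mu\}$, and $\mu(p)=\min\{\mu\in\{2,3\}: D_\mu(p)\ne\varnothing\}$. A $3$-cycle is a directed graph on three vertices $x_1,x_2,x_3$ whose arc set is exactly $\{(x_1,x_2),(x_2,x_3),(x_3,x_1)\}$. *)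

From mathcomp Require Import all_boot fingroup perm.
Set Implicit Arguments. Unset Strict Implicit. Unset Printing Implicit Defensive.

(* Alternatives N = {1,2,3} are 'I_3, individuals H = {1,2,3} are 'I_3.
   A linear order on N is represented by a ranking o : {perm 'I_3}:
   o r is the alternative in position r (r = 0 is the top). *)
Definition alt := 'I_3.
Definition indiv := 'I_3.
Definition lorder := {perm alt}.
Definition profile := indiv -> lorder.

Definition prefers (o : lorder) (x y : alt) : bool := ((o^-1)%g x < (o^-1)%g y)%N.

(* reversed order: position r of the reversal is position 2 - r of o *)
Definition rev_order (o : lorder) : lorder := (perm (@rev_ord_inj 3) * o)%g.
Definition rev_profile (p : profile) : profile := fun i => rev_order (p i).

Definition nprefer (p : profile) (x y : alt) : nat := #|[set i : indiv | prefers (p i) x y]|.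

Definition beats (mu : nat) (p : profile) (x y : alt) : bool := (mu <= nprefer p x y)%N.

Definition Gamma (mu : nat) (p : profile) : rel alt := fun x y => beats mu p x y.

Definition is_3cycle (E : rel alt) : Prop :=
  exists x1 x2 x3 : alt, [/\ x1 != x2, x2 != x3 & x1 != x3] /\
    forall x y, E x y <-> ((x, y) = (x1, x2) \/ (x, y) = (x2, x3) \/ (x, y) = (x3, x1)).

Definition D (mu : nat) (p : profile) : {set alt} :=
  [set x | [forall y, (nprefer p y x < mu)%N]].

(* mu(p) = min { mu in {2,3} | D_mu(p) <> empty }, None if that set is empty *)
Definition mu_of (p : profile) : option nat :=
  if D 2 p != set0 then Some 2 else if D 3 p != set0 then Some 3 else None.

Definition top (o : lorder) : alt := o ord0.
Definition third (o : lorder) : alt := o ord_max.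

Definition pairwise_distinct (f : indiv -> alt) : Prop :=
  forall i j : indiv, i != j -> f i != f j.

From mathcomp Require Import all_boot fingroup perm zify.

Set Implicit Arguments.
Unset Strict Implicit.
Unset Printing Implicit Defensive.

(* With three voters the majority graph Gamma_2 is a tournament on three
   vertices, so it is a 3-cycle exactly when every alternative is beaten.
   An unbeaten alternative x is ranked third by some voter, so both other
   voters must rank x first: distinct tops and thirds rule this out.
   Conversely a top shared by two voters is unbeaten, and a shared third
   beats nothing, both impossible in a 3-cycle.
   Unanimity can never beat the top of a voter, which gives D_3 <> set0 and,
   when tops are distinct, an empty Gamma_3.  Reversal reverses Gamma_2, and a
   3-cycle reversed is a 3-cycle, whence mu(p) = mu(p^r). *)

Lemma rev_order_inv (o : lorder) x :
  ((rev_order o)^-1)%g x = rev_ord ((o^-1)%g x).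
Proof.
by apply: (@perm_inj _ (rev_order o)); rewrite permKV /rev_order permM permE rev_ordK permKV.
Qed.

Lemma prefers_rev (o : lorder) x y : prefers (rev_order o) x y = prefers o y x.
Proof.
rewrite /prefers !rev_order_inv /=.
case: ((o^-1)%g x) ((o^-1)%g y) => a /= a3 [b /= b3].
apply/idP/idP; lia.
Qed.

Lemma prefers_irr (o : lorder) x : prefers o x x = false.
Proof. by rewrite /prefers ltnn. Qed.

Lemma prefers_asym (o : lorder) x y : x != y -> prefers o y x = ~~ prefers o x y.
Proof.
move=> neq_xy; rewrite /prefers.
have : (o^-1)%g x != (o^-1)%g y :> nat by rewrite val_eqE (inj_eq perm_inj).
by move=> neq; apply/idP/idP; lia.
Qed.

Lemma prefers_top (o : lorder) x : prefers o x (top o) = false.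
Proof. by rewrite /prefers /top permK ltn0. Qed.

Lemma prefers_third (o : lorder) x : prefers o (third o) x = false.
Proof. by rewrite /prefers /third permK ltnNge -ltnS ltn_ord. Qed.

Lemma prefers_topl (o : lorder) y : y != top o -> prefers o (top o) y.
Proof. by move=> neq; rewrite prefers_asym // prefers_top. Qed.

Lemma prefers_thirdr (o : lorder) y : y != third o -> prefers o y (third o).
Proof. by move=> neq; rewrite prefers_asym 1?eq_sym // prefers_third. Qed.

Lemma top_maximal (o : lorder) x : (forall y, y != x -> prefers o x y) -> x = top o.
Proof.
move=> x_max; apply/eqP; apply: contraFT (prefers_top o x) => neq.
by apply: x_max; rewrite eq_sym.
Qed.

Lemma nprefer_rev (p : profile) x y : nprefer (rev_profile p) x y = nprefer p y x.
Proof. by apply: eq_card => i; rewrite !inE prefers_rev. Qed.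

Lemma nprefer_irr (p : profile) x : nprefer p x x = 0.
Proof. by rewrite -(cards0 indiv); apply: eq_card => i; rewrite !inE prefers_irr. Qed.

Lemma nprefer_asym (p : profile) x y : x != y -> nprefer p y x = 3 - nprefer p x y.
Proof.
move=> neq_xy; rewrite /nprefer.
have -> : [set i | prefers (p i) y x] = ~: [set i | prefers (p i) x y].
  by apply/setP => i; rewrite !inE prefers_asym.
by rewrite cardsCs setCK card_ord.
Qed.

Lemma Gamma2_irr (p : profile) x : ~~ Gamma 2 p x x.
Proof. by rewrite /Gamma /beats nprefer_irr. Qed.

Lemma Gamma2_asym (p : profile) x y : x != y -> Gamma 2 p y x = ~~ Gamma 2 p x y.
Proof.
move=> neq_xy; rewrite /Gamma /beats nprefer_asym //.
have := max_card [set i | prefers (p i) x y]; rewrite card_ord /nprefer.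
by move=> le3; apply/idP/idP; lia.
Qed.

Lemma Gamma2_rev (p : profile) x y : Gamma 2 (rev_profile p) x y = Gamma 2 p y x.
Proof. by rewrite /Gamma /beats nprefer_rev. Qed.

Lemma Gamma2_pair (p : profile) i j x y :
  i != j -> prefers (p i) x y -> prefers (p j) x y -> Gamma 2 p x y.
Proof.
move=> neq_ij pi pj; rewrite /Gamma /beats /nprefer.
apply: (@leq_trans #|[set i; j]|); first by rewrite cards2 neq_ij.
by apply: subset_leq_card; apply/subsetP => k; rewrite !inE => /orP [] /eqP ->.
Qed.

Lemma Gamma2_dissent (p : profile) i k x y :
  Gamma 2 p x y -> ~~ prefers (p k) x y -> i != k -> prefers (p i) x y.
Proof.
move=> maj dissent neq_ik.
have sub : [set l | prefers (p l) x y] \subset [set~ k].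
  by apply/subsetP => l; rewrite !inE; apply: contraTneq => ->.
have /eqP eqA : [set l | prefers (p l) x y] == [set~ k].
  by rewrite eqEcard sub cardsC1 card_ord.
have : i \in [set~ k] by rewrite !inE.
by rewrite -eqA inE.
Qed.

Lemma Gamma3_unanimous (p : profile) i x y : Gamma 3 p x y -> prefers (p i) x y.
Proof.
move=> unan; have /eqP eqA : [set l | prefers (p l) x y] == setT.
  by rewrite eqEcard subsetT cardsT card_ord.
by have := in_setT i; rewrite -eqA inE.
Qed.

Lemma ord3_cover (a b c : 'I_3) :
  a != b -> b != c -> a != c -> forall x, [|| x == a, x == b | x == c].
Proof.
move=> nab nbc nac x.
have /eqP abc : [set a; b; c] == setT.
  rewrite eqEcard subsetT cardsT card_ord setUC cardsU1 cards2 !inE nab negb_or.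
  by rewrite (eq_sym c a) (eq_sym c b) nac nbc.
by have := in_setT x; rewrite -abc !inE -orbA.
Qed.

Lemma is_3cycle_converse (E : rel alt) : is_3cycle E -> is_3cycle (fun x y => E y x).
Proof.
case=> x1 [x2 [x3 [[n12 n23 n13] arcs]]].
exists x3, x2, x1; split; first by split; rewrite eq_sym.
move=> x y; rewrite arcs.
split=> [[[-> ->]|[[-> ->]|[-> ->]]]|[[-> ->]|[[-> ->]|[-> ->]]]]; tauto.
Qed.

Lemma is_3cycle_in_arc (E : rel alt) : is_3cycle E -> forall x, exists y, E y x.
Proof.
case=> x1 [x2 [x3 [[n12 n23 n13] arcs]]] x.
case/or3P: (ord3_cover n12 n23 n13 x) => /eqP ->;
  [exists x3 | exists x1 | exists x2]; apply/arcs; tauto.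
Qed.

Lemma is_3cycle_out_arc (E : rel alt) : is_3cycle E -> forall x, exists y, E x y.
Proof. by move/is_3cycle_converse/is_3cycle_in_arc. Qed.

Section Tournament.

Variable E : rel alt.
Hypothesis E_irr : forall x, ~~ E x x.
Hypothesis E_asym : forall x y, x != y -> E y x = ~~ E x y.

Lemma tournament_3cycle : (forall x, exists y, E y x) -> is_3cycle E.
Proof.
move=> in_arc; pose x1 : alt := ord0.
have [x3 e31] := in_arc x1; have [x2 e23] := in_arc x3.
have n13 : x1 != x3 by apply: contraTneq e31 => <-; exact: E_irr.
have n23 : x2 != x3 by apply: contraTneq e23 => ->; exact: E_irr.
have n12 : x1 != x2 by apply: contraTneq e23 => <-; rewrite E_asym 1?eq_sym // e31.
have e12 : E x1 x2.
  apply: contraT => ne12; have [y] := in_arc x2.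
  case/or3P: (ord3_cover n12 n23 n13 y) => /eqP ->.
  - by rewrite (negbTE ne12).
  - by rewrite (negbTE (E_irr x2)).
  - by rewrite E_asym // e23.
have ne21 : ~~ E x2 x1 by rewrite E_asym // e12.
have ne32 : ~~ E x3 x2 by rewrite E_asym // e23.
have ne13 : ~~ E x1 x3 by rewrite E_asym 1?eq_sym // e31.
have [n21 n32 n31] : [/\ x2 != x1, x3 != x2 & x3 != x1] by split; rewrite eq_sym.
exists x1, x2, x3; split=> // x y.
have -> : E x y = [|| (x, y) == (x1, x2), (x, y) == (x2, x3) | (x, y) == (x3, x1)].
  case/or3P: (ord3_cover n12 n23 n13 x) => /eqP ->;
  case/or3P: (ord3_cover n12 n23 n13 y) => /eqP ->;
  by rewrite !xpair_eqE !eqxx ?(negbTE (E_irr _)) ?e12 ?e23 ?e31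
    ?(negbTE ne21) ?(negbTE ne32) ?(negbTE ne13) ?(negbTE n12) ?(negbTE n23) ?(negbTE n13)
    ?(negbTE n21) ?(negbTE n32) ?(negbTE n31) ?andbF.
by split=> [/or3P [] /eqP | [|[|]] ->]; rewrite ?eqxx ?orbT; auto.
Qed.

Lemma tournament_3cycleP : is_3cycle E <-> [forall x, [exists y, E y x]].
Proof.
split=> [/is_3cycle_in_arc in_arc | /forallP in_arc].
  by apply/forallP => x; have [y eyx] := in_arc x; apply/existsP; exists y.
by apply: tournament_3cycle => x; apply/existsP.
Qed.

End Tournament.

Lemma is_3cycle_eq (E F : rel alt) : E =2 F -> is_3cycle E -> is_3cycle F.
Proof.
move=> eqEF [x1 [x2 [x3 [neq arcs]]]]; exists x1, x2, x3; split=> // x y.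
by rewrite -eqEF.
Qed.

Lemma pairwise_distinct_surj (f : indiv -> alt) :
  pairwise_distinct f -> forall x, exists i, f i = x.
Proof.
move=> dist x; have f_inj : injective f by move=> i j /eqP; apply: contraTeq; exact: dist.
by have [g _ gK] := injF_bij f_inj; exists (g x).
Qed.

Section Profile.

Variable p : profile.

Lemma Gamma2_3cycleP : is_3cycle (Gamma 2 p) <-> [forall x, [exists y, Gamma 2 p y x]].
Proof. exact: tournament_3cycleP (Gamma2_irr p) (Gamma2_asym p). Qed.

Lemma Gamma2_rev_3cycle : is_3cycle (Gamma 2 (rev_profile p)) <-> is_3cycle (Gamma 2 p).
Proof.
by split=> /is_3cycle_converse; apply: is_3cycle_eq => x y; rewrite Gamma2_rev.
Qed.

Lemma Gamma3_top i y : ~~ Gamma 3 p y (top (p i)).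
Proof. by apply/negP => /(Gamma3_unanimous i); rewrite prefers_top. Qed.

Lemma distinct_tops_no_unanimity :
  pairwise_distinct (fun i => top (p i)) -> forall x y, ~~ Gamma 3 p x y.
Proof. by move=> dtop x y; have [i <-] := pairwise_distinct_surj dtop y; apply: Gamma3_top. Qed.

Lemma shared_top_no_in_arc i j :
  i != j -> top (p i) = top (p j) -> forall y, ~~ Gamma 2 p y (top (p i)).
Proof.
move=> nij eq_top y; have [->|nyt] := eqVneq y (top (p i)); first exact: Gamma2_irr.
rewrite Gamma2_asym 1?eq_sym // negbK; apply: (Gamma2_pair nij); first exact: prefers_topl.
by rewrite eq_top; apply: prefers_topl; rewrite -eq_top.
Qed.

Lemma shared_third_no_out_arc i j :
  i != j -> third (p i) = third (p j) -> forall y, ~~ Gamma 2 p (third (p i)) y.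
Proof.
move=> nij eq_third y; have [->|nyt] := eqVneq y (third (p i)); first exact: Gamma2_irr.
rewrite Gamma2_asym // negbK; apply: (Gamma2_pair nij); first exact: prefers_thirdr.
by rewrite eq_third; apply: prefers_thirdr; rewrite -eq_third.
Qed.

Lemma is_3cycle_distinct_tops :
  is_3cycle (Gamma 2 p) -> pairwise_distinct (fun i => top (p i)).
Proof.
move=> cyc i j nij; apply/eqP => eq_top.
have [y] := is_3cycle_in_arc cyc (top (p i)).
by apply/negP; exact: shared_top_no_in_arc eq_top y.
Qed.

Lemma is_3cycle_distinct_thirds :
  is_3cycle (Gamma 2 p) -> pairwise_distinct (fun i => third (p i)).
Proof.
move=> cyc i j nij; apply/eqP => eq_third.
have [y] := is_3cycle_out_arc cyc (third (p i)).
by apply/negP; exact: shared_third_no_out_arc eq_third y.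
Qed.

Lemma distinct_tops_thirds_in_arc :
  pairwise_distinct (fun i => top (p i)) -> pairwise_distinct (fun i => third (p i)) ->
  [forall x, [exists y, Gamma 2 p y x]].
Proof.
move=> dtop dthird; apply/forallP => x; apply: contraT; rewrite negb_exists => /forallP no_in.
have [k third_k] := pairwise_distinct_surj dthird x.
have top_i i : i != k -> x = top (p i).
  move=> nik; apply: top_maximal => y nyx; apply: (Gamma2_dissent (k := k)) nik.
    by rewrite Gamma2_asym // no_in.
  by rewrite -third_k prefers_third.
have lift_ij : lift k ord0 != lift k ord_max by rewrite (inj_eq (lift_inj (h := k))).
by have := dtop _ _ lift_ij; rewrite -!top_i ?eqxx // eq_sym neq_lift.
Qed.

Lemma D3_neq0 : D 3 p != set0.
Proof.
apply/set0Pn; exists (top (p ord0)); rewrite inE; apply/forallP => y.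
by rewrite ltnNge; exact: Gamma3_top.
Qed.

Lemma D2_neq0 : (D 2 p != set0) = ~~ [forall x, [exists y, Gamma 2 p y x]].
Proof.
rewrite negb_forall; apply/set0Pn/existsP => -[x].
  rewrite inE => /forallP no_in; exists x; rewrite negb_exists.
  by apply/forallP => y; rewrite /Gamma /beats -ltnNge.
rewrite negb_exists => /forallP no_in; exists x; rewrite inE.
by apply/forallP => y; rewrite ltnNge; exact: no_in.
Qed.

Lemma mu_ofE : mu_of p = Some (if [forall x, [exists y, Gamma 2 p y x]] then 3 else 2).
Proof. by rewrite /mu_of D2_neq0 D3_neq0; case: [forall x, [exists y, Gamma 2 p y x]]. Qed.

End Profile.

Lemma mu_of_rev (p : profile) : mu_of p = mu_of (rev_profile p).
Proof.
rewrite !mu_ofE; congr (Some (if _ then 3 else 2)).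
by apply/idP/idP => /Gamma2_3cycleP/Gamma2_rev_3cycle/Gamma2_3cycleP.
Qed.

Theorem lemma8 (p : profile) :
  ((pairwise_distinct (fun i => top (p i)) /\ pairwise_distinct (fun i => third (p i)))
     <-> is_3cycle (Gamma 2 p))
  /\ ((pairwise_distinct (fun i => top (p i)) /\ pairwise_distinct (fun i => third (p i)))
        \/ is_3cycle (Gamma 2 p) ->
      forall x y : alt, ~~ Gamma 3 p x y)
  /\ mu_of p = mu_of (rev_profile p).
Proof.
have latin_3cycle : pairwise_distinct (fun i => top (p i)) /\
    pairwise_distinct (fun i => third (p i)) <-> is_3cycle (Gamma 2 p).
  split=> [[dtop dthird] | cyc].
    by apply/Gamma2_3cycleP; exact: distinct_tops_thirds_in_arc.
  by split; [exact: is_3cycle_distinct_tops | exact: is_3cycle_distinct_thirds].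
split; [exact: latin_3cycle | split; last exact: mu_of_rev].
by case=> [[dtop _] | /latin_3cycle [dtop _]]; exact: distinct_tops_no_unanimity.
Qed.
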